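(* Let $N\ge 1$ and let $A=(A_1,\dots,A_{2N})\in(\mathbb{R}_{>0})^{2N}$ satisfy $\sum_{l=1}^N A_{2l}<\sum_{l=1}^N A_{2l-1}$ and the highest weight condition. Run Algorithm I on $x^{(1)}=A$, producing $u\ge1$ and pairs $(\mu^{(i)},\nu^{(i)})_{1\le i\le u}$, and put $\lambda^{(i)}=\sum_{l=1}^{i}\mu^{(l)}$. Let $\ell_1\le\ell_2\le\cdots\le\ell_N$ be the list consisting of $\lambda^{(1)}$ repeated $\nu^{(1)}$ times, followed by $\lambda^{(2)}$ repeated $\nu^{(2)}$ times, ..., followed by $\lambda^{(u)}$ repeated $\nu^{(u)}$ times (this list has exactly $N$ terms). Then for every $1\le k\le N$, $$\sum_{j=1}^{k}\ell_j=\min_{\substack{1\le i_1\triangleleft i_2\triangleleft\cdots\triangleleft i_k\le 2N\\ (i_1,i_k)\neq(1,2N)}}\big(A_{i_1}+A_{i_2}+\cdots+A_{i_k}\big)=:H_k.$$ (Equivalently: the Young diagram with $\nu^{(i)}$ rows of length $\lambda^{(i)}$ has, below height $k$ from its bottom, area $H_k$, the $k$th conserved quantity of the tropical periodic Toda lattice.)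
   Context: For integers $i,j$, $i\triangleleft j$ means $i+1<j$; the minimum runs over index tuples $1\le i_1<\dots<i_k\le 2N$ with consecutive indices differing by at least $2$, excluding tuples with $i_1=1$ and $i_k=2N$ simultaneously. Highest weight condition: a sequence $x_1,\dots,x_{2n}$ of nonnegative reals satisfies it if $\sum_{i=1}^k(x_{2i-1}-x_{2i})\ge0$ for all $1\le k\le n$. Algorithm I. Set $N^{(1)}=N$, $x^{(1)}=A$. Given $x^{(i)}=(x^{(i)}_1,\dots,x^{(i)}_{2N^{(i)}})$ of positive reals satisfying the highest weight condition: let $\mu^{(i)}=\min_j x^{(i)}_j$ and $y^{(i)}_j=x^{(i)}_j-\mu^{(i)}$. In the (linear, non-cyclic) array $y^{(i)}_1,\dots,y^{(i)}_{2N^{(i)}}$ consider the maximal runs of consecutive zeros (a lone zero counts as a run); say there are $k^{(i)}$ runs with lengths $n^{(i)}_1,\dots,n^{(i)}_{k^{(i)}}$ (from left to right). Let $N^{(i+1)}=N^{(i)}-\sum_{j}\lceil n^{(i)}_j/2\rceil$ and $\nu^{(i)}=N^{(i)}-N^{(i+1)}$. If $N^{(i+1)}=0$, stop and set $u=i$. Otherwise form $x^{(i+1)}$ from $y^{(i)}$ as follows: (a) if a run of zeros is at the left end of the array, delete it (its length is even); (b) for every run of zeros lying between positive entries $a,b$ (as $\dots,a,0,\dots,0,b,\dots$), delete the zeros if the run length is even, and if it is odd delete the zeros and also replace $a,b$ by the single entry $a+b$; (c) if a run of zeros is at the right end, preceded by a positive entry $a$, delete the zeros, and if its length is odd also delete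 $a$ and add $a$ to the first entry of the resulting array. The result is an array $x^{(i+1)}$ of $2N^{(i+1)}$ positive reals satisfying the highest weight condition; repeat. *)

From HB Require Import structures.
From mathcomp Require Import all_boot all_order all_algebra.
Set Implicit Arguments. Unset Strict Implicit. Unset Printing Implicit Defensive.
Import Order.TTheory GRing.Theory Num.Theory.
Local Open Scope ring_scope.

Section Toda.
Variable R : realFieldType.

(* 1-based access: ent x i = x_i *)
Definition ent (x : seq R) (i : nat) : R := nth 0 x i.-1.

Definition seqmin (x : seq R) : R := foldr Order.min (head 0 x) x.

(* Decompose y as  0^z0, p_1, 0^z_1, p_2, 0^z_2, ..., p_m, 0^z_m
   with p_j <> 0; returns (z0, [:: (p_1,z_1); ...; (p_m,z_m)]). *)
Definition blocks (y : seq R) : nat * seq (R * nat) :=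
  foldr (fun a acc => if a == 0 then (acc.1.+1, acc.2)
                      else (0%N, (a, acc.1) :: acc.2)) (0%N, [::]) y.

Definition nu_of (y : seq R) : nat :=
  (uphalf (blocks y).1 + \sum_(p <- (blocks y).2) uphalf p.2)%N.

(* rule (b): merge chains of positive entries separated by odd zero runs *)
Fixpoint grp (ps : seq (R * nat)) : seq R :=
  match ps with
  | [::] => [::]
  | (a, z) :: ps' =>
      match grp ps' with
      | g :: rest => if odd z then (a + g) :: rest else a :: g :: rest
      | [::] => [:: a]
      end
  end.

(* one step of Algorithm I on y (already shifted by -mu):
   (a) leading zeros deleted, (b) internal runs, (c) trailing run *)
Definition next_arr (y : seq R) : seq R :=
  let ps := (blocks y).2 in
  let vs := grp ps in
  let trailing_odd := if ps is [::] then false else odd (last (0, 0%N) ps).2 in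
  if trailing_odd then
    match take (size vs).-1 vs with
    | [::] => [::]
    | v :: r => (v + last 0 vs) :: r
    end
  else vs.

(* Algorithm I: returns the list of pairs (mu^(i), nu^(i)), i = 1..u.
   fuel bounds the number of iterations (N suffices since nu^(i) >= 1). *)
Fixpoint algoI (fuel M : nat) (x : seq R) : seq (R * nat) :=
  match fuel with
  | 0%N => [::]
  | f.+1 =>
      let mu := seqmin x in
      let y := [seq a - mu | a <- x] in
      let nu := nu_of y in
      let M' := (M - nu)%N in
      if M' == 0%N then [:: (mu, nu)]
      else (mu, nu) :: algoI f M' (next_arr y)
  end.

Fixpoint ells (acc : R) (ps : seq (R * nat)) : seq R :=
  match ps with
  | [::] => [::]
  | (mu, nu) :: ps' => nseq nu (acc + mu) ++ ells (acc + mu) ps'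
  end.

Definition ell_list (N : nat) (A : seq R) : seq R := ells 0 (algoI N N A).

Definition admissible (N k : nat) (t : seq nat) : bool :=
  [&& size t == k,
      all (fun i => (1 <= i <= 2 * N)%N) t,
      sorted (fun i j => (i.+1 < j)%N) t
    & ~~ ((head 0%N t == 1%N) && (last 0%N t == 2 * N)%N)].

Definition tuple_sum (A : seq R) (t : seq nat) : R := \sum_(i <- t) ent A i.

Definition highest_weight (n : nat) (x : seq R) : Prop :=
  forall k, (1 <= k <= n)%N ->
    0 <= \sum_(1 <= i < k.+1) (ent x (2 * i).-1 - ent x (2 * i)).

End Toda.

From HB Require Import structures.
From mathcomp Require Import all_boot all_order all_algebra zify ring.
Set Implicit Arguments. Unset Strict Implicit. Unset Printing Implicit Defensive.
Import Order.TTheory GRing.Theory Num.Theory.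
Local Open Scope ring_scope.

(* Read an array x of length 2N cyclically.  An admissible k-tuple is the
   same thing as a set of k pairwise non-adjacent positions of the cycle, so
   H_k is the least sum of k cyclically non-adjacent entries of A.  We call
   a list L a diagram of x when, for every k <= size L, the sum of the
   first k entries of L is this cyclic minimum H_k(x).  Induction
   along the algorithm rests on three facts:
   - adding mu to every entry adds k * mu to H_k (diagram_shift);
   - one step of the algorithm, applied to y = x - mu, is a chain of nu
     elementary reductions of the cycle: deleting two adjacent zeros, or
     replacing a, 0, b by a + b (reduces_next_arr); the highest weight
     condition is only needed to see that the leading zero run is even;
   - an elementary reduction y -> z of a nonnegative array satisfies
     H_(k+1)(y) = H_k(z), so the diagram of y is a row of length 0 followed
     by that of z (step_diagram). *)

(* Two chosen positions must not be adjacent; a selection mask m of a cyclic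
   array is independent when [cycle nonadj m] holds. *)
Definition nonadj (a b : bool) : bool := ~~ (a && b).

Lemma path_nonadj_false c s : path nonadj c s -> path nonadj false s.
Proof. by case: s => //= y s /andP[_ ->]. Qed.

Lemma cycle_path_false m : cycle nonadj m -> path nonadj false m.
Proof. by case: m => //= h t; rewrite rcons_path => /andP[]. Qed.

Lemma sorted_path_false m : sorted nonadj m = path nonadj false m.
Proof. by case: m. Qed.

Lemma cycle_nonadjE m :
  cycle nonadj m = sorted nonadj m && ~~ (head false m && last false m).
Proof.
case: m => //= b m; rewrite rcons_path /nonadj; by case: b; case: (last _ m).
Qed.

Lemma cycle_nonadj_cons b s :
  cycle nonadj (b :: s) = path nonadj b s && nonadj (last b s) b.
Proof. by rewrite /= rcons_path. Qed.

Lemma cycle_nonadj_nseq n : cycle nonadj (nseq n false).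
Proof.
rewrite cycle_nonadjE; case: n => //= n; rewrite andbT.
by elim: n => //= n ->.
Qed.

Lemma cycle_nonadj_false m : path nonadj false m -> cycle nonadj (false :: m).
Proof. by move=> pm; rewrite cycle_nonadjE /= andbT. Qed.

Section CyclicMinimum.
Variable R : realFieldType.
Implicit Types (x y w : seq R) (m : bitseq).

Definition mask_sum x m : R := \sum_(a <- mask m x) a.

Definition nonneg x := all (fun a : R => 0 <= a) x.

Lemma mask_sum_nil m : mask_sum [::] m = 0.
Proof. by rewrite /mask_sum mask0 big_nil. Qed.

Lemma mask_sumT a x m : mask_sum (a :: x) (true :: m) = a + mask_sum x m.
Proof. by rewrite /mask_sum /= big_cons. Qed.

Lemma mask_sumF a x m : mask_sum (a :: x) (false :: m) = mask_sum x m.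
Proof. by []. Qed.

Lemma mask_sum0 x c m : mask_sum (0 :: x) (c :: m) = mask_sum x m.
Proof. by case: c; rewrite ?mask_sumT ?mask_sumF ?add0r. Qed.

Lemma mask_sum_ge0 x m : nonneg x -> 0 <= mask_sum x m.
Proof.
move=> /allP x_ge0; rewrite /mask_sum big_seq.
by apply: sumr_ge0 => i /mem_mask; exact: x_ge0.
Qed.

(* [cyclic_min x k v]: v is the least sum of at least k pairwise
   non-adjacent entries of the cyclic array x, and it is attained by a
   selection of exactly k entries.  For the array A this is H_k. *)
Definition cmin_attained x k v :=
  exists2 m, [/\ size m = size x, cycle nonadj m & count id m = k]
           & mask_sum x m = v.

Definition cmin_bound x k v :=
  forall m, size m = size x -> cycle nonadj m -> (k <= count id m)%N ->
    v <= mask_sum x m.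

Definition cyclic_min x k v := cmin_attained x k v /\ cmin_bound x k v.

Lemma cyclic_min0 x : nonneg x -> cyclic_min x 0 0.
Proof.
move=> x_ge0; split => [|m _ _ _]; last exact: mask_sum_ge0.
exists (nseq (size x) false).
  by rewrite size_nseq cycle_nonadj_nseq count_nseq mul0n.
by rewrite /mask_sum mask_false big_nil.
Qed.

(* Cyclic minima only depend on x up to rotation, which lets every local
   reduction be performed at the front of the array. *)
Lemma cyclic_min_rot i x k v : cyclic_min x k v -> cyclic_min (rot i x) k v.
Proof.
have count_rot m : count id (rot i m) = count id m.
  by apply/permP; rewrite perm_rot.
have sum_rot m x' : size m = size x' -> mask_sum (rot i x') (rot i m) = mask_sum x' m.
  by move=> sz; rewrite /mask_sum mask_rot //; apply: perm_big; rewrite perm_rot.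
case=> [[m [sz cy ct] ws] lb]; split.
  exists (rot i m); first by rewrite !size_rot rot_cycle count_rot.
  by rewrite sum_rot.
move=> m1 sz1 cy1 ct1.
have sz1' : size (rotr i m1) = size x by rewrite size_rotr sz1 size_rot.
rewrite -(rotrK i m1) sum_rot //; apply: lb => //.
  by rewrite -(rot_cycle i) rotrK.
by rewrite -count_rot rotrK.
Qed.

Lemma cyclic_min_unrot i x k v : cyclic_min (rot i x) k v -> cyclic_min x k v.
Proof.
move=> H; have := cyclic_min_rot (size (rot i x) - i) H.
by rewrite -/(rotr i (rot i x)) rotK.
Qed.

Lemma cmin_bound_lift x y k v :
  (forall m, size m = size y -> cycle nonadj m ->
     exists m', [/\ size m' = size x, cycle nonadj m',
       ((count id m).-1 <= count id m')%N & mask_sum x m' <= mask_sum y m]) ->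
  cmin_bound x k v -> cmin_bound y k.+1 v.
Proof.
move=> transfer lb m sz cy ct; have [m' [sz' cy' ct' le_sum]] := transfer m sz cy.
apply: le_trans le_sum; apply: lb => //; apply: leq_trans ct'.
by rewrite -ltnS; case: (count id m) ct.
Qed.

Lemma cyclic_min_00 w k v :
  nonneg w -> cyclic_min w k v -> cyclic_min [:: 0, 0 & w] k.+1 v.
Proof.
move=> w_ge0 [[m [sz cy ct] ws] lb]; split.
  exists (if last false m then [:: false, true & m] else [:: true, false & m]).
    case E: (last false m); (split; first by rewrite /= sz); last by rewrite /= ct.
    - rewrite cycle_nonadj_cons /= /nonadj /=.
      case: m E cy {sz ct ws} => //= h t E.
      by rewrite rcons_path E /nonadj andbT => /andP[-> /=]; case: h {E}.
    - by rewrite /= ct.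
    - by rewrite cycle_nonadj_cons /= E andbT; apply: cycle_path_false.
  by case: (last false m); rewrite !mask_sum0.
(* Erase the two zero positions; if that makes the remaining mask invalid,
   it chose both ends of w, and the first of them is dropped instead. *)
move=> {m sz cy ct ws}.
apply: cmin_bound_lift lb => -[|c1 [|c2 m]] // [sz'].
rewrite cycle_nonadjE /= => /andP[/andP[n12 pm] hl]; rewrite !mask_sum0.
case: c1 c2 n12 hl pm => -[] //= _ hl pm.
- exists m; split => //; rewrite cycle_nonadjE sorted_path_false pm /=.
  by move: hl; case: (last false m); rewrite ?andbF.
- exists m; split => //; rewrite cycle_nonadjE sorted_path_false.
  by case: m pm {hl sz'} => //= h t /andP[nh ->]; case: h nh.
- case E: (head false m && last false m); last first.
    exists m; split => //; last exact: leq_pred.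
    by rewrite cycle_nonadjE sorted_path_false pm E.
  case: m E pm sz' {hl} => //= h t /andP[-> _] pt.
  case: w w_ge0 => //= a w /andP[a_ge0 _] [szt].
  exists (false :: t); split => //; first by rewrite /= szt.
  + exact/cycle_nonadj_false/(path_nonadj_false pt).
  + by rewrite mask_sumT mask_sumF ler_wpDl.
Qed.

Lemma cyclic_min_a0b a b w k v : 0 <= a -> 0 <= b ->
  cyclic_min ((a + b) :: w) k v -> cyclic_min [:: a, 0, b & w] k.+1 v.
Proof.
move=> a_ge0 b_ge0 [[[|c m] [sz cy ct] ws] lb] //; split.
  exists (if c then [:: true, false, true & m] else [:: false, true, false & m]).
    by move: sz cy ct => /= [sz]; case: c {ws} => cy ct; split; rewrite /= ?sz ?ct.
  case: c ws {sz cy ct} => <-; first by rewrite mask_sumT mask_sumF !mask_sumT addrA.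
  by rewrite !mask_sumF mask_sumT add0r.
(* Merge the three positions into one, chosen iff a or b was chosen, or
   unchosen (at the cost of a nonnegative entry) if that would clash. *)
move=> {m sz cy ct ws}.
apply: cmin_bound_lift lb => -[|c1 [|c2 [|c3 m]]] // [sz'].
rewrite cycle_nonadjE /= => /andP[/andP[n12 /andP[n23 pm]] hl].
have cy_false : cycle nonadj (false :: m).
  exact/cycle_nonadj_false/(path_nonadj_false pm).
case: c2 n12 n23 => /= n12 n23.
  case: c1 c3 n12 n23 hl pm => -[] // _ _ _ _.
  exists (false :: m); split => //; first by rewrite /= sz'.
  by rewrite !mask_sumF mask_sumT add0r.
move: c1 c3 n12 n23 hl pm => [] [] _ _ hl pm.
- exists (true :: m); split => //; first by rewrite /= sz'.
    by rewrite cycle_nonadjE /= pm.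
  by rewrite !mask_sumT mask_sumF mask_sumT addrA.
- exists (false :: m); split => //; first by rewrite /= sz'.
  by rewrite mask_sumT !mask_sumF ler_wpDl.
- exists (false :: m); split => //; first by rewrite /= sz'.
  by rewrite !mask_sumF mask_sumT ler_wpDl.
- exists (false :: m); split => //; first by rewrite /= sz'.
  exact: leq_pred.
Qed.

(* A two-entry cycle a, 0 admits exactly one chosen entry, of weight 0. *)
Lemma cyclic_min_pair (a : R) k v :
  0 <= a -> cyclic_min [::] k v -> cyclic_min [:: a; 0] k.+1 v.
Proof.
move=> a_ge0 [[m [sz _ ct] ws] _]; case: m sz ct ws => // _ <- <-; split.
  by exists [:: false; true] => //; rewrite mask_sumF mask_sumT mask_sum_nil addr0.
by move=> m _ _ _; rewrite mask_sum_nil mask_sum_ge0 //= a_ge0 lexx.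
Qed.

End CyclicMinimum.

Section Reductions.
Variable R : realFieldType.
Implicit Types (x y z w u : seq R).

(* Elementary reductions of a cyclic array: delete two consecutive zeros,
   or delete a zero and merge its two neighbours (possibly across the end
   of the array, possibly a single entry with itself). *)
Inductive step : seq R -> seq R -> Prop :=
| step_00 u w : step (u ++ [:: 0, 0 & w]) (u ++ w)
| step_a0b u a b w : step (u ++ [:: a, 0, b & w]) (u ++ (a + b) :: w)
| step_wrap a mid l : step (a :: mid ++ [:: l; 0]) ((a + l) :: mid)
| step_pair a : step [:: a; 0] [::].

Inductive reduces : seq R -> seq R -> nat -> Prop :=
| reduces_refl y : reduces y y 0
| reduces_step x y z d : step x y -> reduces y z d -> reduces x z d.+1.

Lemma reduces_trans x y z d1 d2 :
  reduces x y d1 -> reduces y z d2 -> reduces x z (d1 + d2).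
Proof.
elim=> {x y d1} // x y y' d xy _ IH yz.
by apply: reduces_step xy _; apply: IH.
Qed.

Lemma step_reduces x y : step x y -> reduces x y 1.
Proof. by move=> xy; apply: reduces_step xy (reduces_refl _). Qed.

Lemma step_size y z : step y z -> size y = (size z).+2.
Proof. by case=> *; rewrite /= ?size_cat /=; lia. Qed.

Lemma reduces_size y z d : reduces y z d -> size y = (size z + d.*2)%N.
Proof.
elim=> {y z d} [y|x y z d /step_size -> _ ->]; first by rewrite addn0.
by rewrite doubleS !addnS.
Qed.

Lemma step_nonneg y z : step y z -> nonneg y -> nonneg z.
Proof.
rewrite /nonneg; case=> [u w|u a b w|a mid l|a] //;
  rewrite ?all_cat /= ?all_cat /=.
- by case/andP=> -> /and3P[_ _ ->].
- by case/andP=> -> /and4P[a0 _ b0 ->]; rewrite addr_ge0.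
- by case/and3P=> a0 -> /and3P[l0 _ _]; rewrite addr_ge0.
Qed.

Lemma cyclic_min_swap s u k v : cyclic_min (s ++ u) k v -> cyclic_min (u ++ s) k v.
Proof. by move=> H; apply: (@cyclic_min_unrot _ (size u)); rewrite rot_size_cat. Qed.

Lemma step_cyclic_min y z k v : step y z -> nonneg y ->
  cyclic_min z k v -> cyclic_min y k.+1 v.
Proof.
rewrite /nonneg; case=> [u w|u a b w|a mid l|a].
- rewrite all_cat => /andP[u0 /and3P[_ _ w0]] /cyclic_min_swap H.
  apply: (@cyclic_min_swap [:: 0, 0 & w]).
  by apply: cyclic_min_00 H; rewrite /nonneg all_cat; apply/andP.
- rewrite all_cat => /andP[_ /and4P[a0 _ b0 _]] /cyclic_min_swap H.
  exact: (@cyclic_min_swap [:: a, 0, b & w]) (cyclic_min_a0b a0 b0 H).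
- rewrite /= all_cat => /and3P[a0 _ /and3P[l0 _ _]] H.
  apply: (@cyclic_min_swap [:: l; 0] (a :: mid)).
  by apply: cyclic_min_a0b => //; rewrite addrC.
- by case/andP=> a0 _; apply: cyclic_min_pair.
Qed.

(* [diagram x L]: for every k <= size L, the sum of the first k entries of
   L is the cyclic minimum H_k of x; i.e. L lists the rows of the Young
   diagram of x from the bottom. *)
Definition diagram x (L : seq R) :=
  forall k, (k <= size L)%N ->
    cyclic_min x k (\sum_(0 <= j < k) nth 0 L j).

Lemma diagram_nil : diagram [::] [::].
Proof. by move=> [|//] _; rewrite big_geq //; apply: cyclic_min0. Qed.

Lemma step_diagram y z L : step y z -> nonneg y ->
  diagram z L -> diagram y (0 :: L).
Proof.
move=> yz y0 DL [|k] k_le; first by rewrite big_geq //; apply: cyclic_min0.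
by rewrite big_nat_recl //= add0r; apply: step_cyclic_min yz y0 (DL k _).
Qed.

Lemma reduces_diagram y z d L : reduces y z d -> nonneg y ->
  diagram z L -> diagram y (nseq d 0 ++ L).
Proof.
elim=> {y z d} [//|x y z d xy _ IH x0 DL].
exact: step_diagram xy x0 (IH (step_nonneg xy x0) DL).
Qed.

End Reductions.

Section HighestWeight.
Variable R : realFieldType.
Implicit Types (x y z w u s t : seq R).

Fixpoint altsum s : R := if s is a :: s' then a - altsum s' else 0.

(* The highest weight condition, stated on even prefixes of any length. *)
Definition hw_prefixes s :=
  forall j, (j <= size s)%N -> ~~ odd j -> 0 <= altsum (take j s).

Lemma altsum_cat s t : altsum (s ++ t) = altsum s + (-1) ^+ size s * altsum t.
Proof.
elim: s => [|a s IH] /=; first by rewrite expr0 mul1r add0r.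
by rewrite IH exprS; ring.
Qed.

Lemma take_cat_ge (T : Type) n (s1 s2 : seq T) :
  (size s1 <= n)%N -> take n (s1 ++ s2) = s1 ++ take (n - size s1) s2.
Proof. by move=> le_s1n; rewrite take_cat ltnNge le_s1n. Qed.

Lemma hw_prefixes_dominated y z :
  (forall j, (j <= size z)%N -> ~~ odd j ->
     exists2 j', (j' <= size y)%N && ~~ odd j' &
       altsum (take j' y) <= altsum (take j z)) ->
  hw_prefixes y -> hw_prefixes z.
Proof.
move=> dom hy j jz ej; have [j' /andP[j'y ej'] le_alt] := dom j jz ej.
exact: le_trans (hy j' j'y ej') le_alt.
Qed.

Lemma step_hw_prefixes y z :
  step y z -> nonneg y -> hw_prefixes y -> hw_prefixes z.
Proof.
case=> [u w|u a b w|a mid l|a] y0; apply: hw_prefixes_dominated => j jz ej.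
- case: (leqP j (size u)) => ju.
    exists j; first by rewrite /= ej andbT; move: ju; rewrite !size_cat /=; lia.
    by rewrite !takel_cat.
  exists j.+2; first by rewrite /= ej andbT; move: jz; rewrite !size_cat /=; lia.
  rewrite !take_cat_ge ?(ltnW ju) //; last by lia.
  have -> : (j.+2 - size u = (j - size u).+2)%N by lia.
  by rewrite !altsum_cat /= le_eqVlt; apply/orP; left; apply/eqP; ring.
- case: (leqP j (size u)) => ju.
    exists j; first by rewrite /= ej andbT; move: ju; rewrite !size_cat /=; lia.
    by rewrite !takel_cat.
  exists j.+2; first by rewrite /= ej andbT; move: jz; rewrite !size_cat /=; lia.
  rewrite !take_cat_ge ?(ltnW ju) //; last by lia.
  have -> : (j.+2 - size u = (j - size u).+2)%N by lia.
  case E: (j - size u)%N => [|t]; first by lia.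
  by rewrite !altsum_cat /= le_eqVlt; apply/orP; left; apply/eqP; ring.
- exists j; first by rewrite /= ej andbT; move: jz; rewrite /= size_cat /=; lia.
  case: j jz ej => [|t] jz _; first by rewrite !take0.
  move: y0; rewrite /nonneg /= all_cat /= => /and3P[_ _ /and3P[l0 _ _]].
  by rewrite /= takel_cat; [rewrite lerD2r lerDl | move: jz => /=; lia].
- by exists 0%N; case: j jz ej.
Qed.

Lemma reduces_hw_prefixes y z d :
  reduces y z d -> nonneg y -> hw_prefixes y -> hw_prefixes z.
Proof.
elim=> {y z d} // x y z d xy _ IH x0 hx.
exact: IH (step_nonneg xy x0) (step_hw_prefixes xy x0 hx).
Qed.

Lemma altsum_map_sub c s :
  altsum [seq a - c | a <- s] = altsum s - (if odd (size s) then c else 0).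
Proof.
elim: s => [|a s IH] /=; first by rewrite subr0.
by rewrite IH; case: (odd (size s)) => /=; ring.
Qed.

Lemma hw_prefixes_sub c s : hw_prefixes s -> hw_prefixes [seq a - c | a <- s].
Proof.
move=> hs j; rewrite size_map => js ej.
rewrite -map_take altsum_map_sub size_take_min (minn_idPl js) (negbTE ej) subr0.
exact: hs.
Qed.

Lemma altsum_take2 s : altsum (take 2 s) = nth 0 s 0 - nth 0 s 1.
Proof. by case: s => [|a [|b s]] /=; rewrite ?subr0 ?take0 /= ?subr0. Qed.

Lemma highest_weight_sum x k : ~~ odd (size x) ->
  \sum_(1 <= i < k.+1) (ent x (2 * i).-1 - ent x (2 * i)) = altsum (take (2 * k) x).
Proof.
move=> ev; elim: k => [|k IH]; first by rewrite big_geq // take0.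
rewrite big_nat_recr // IH.
have -> : (2 * k.+1 = 2 * k + 2)%N by lia.
rewrite takeD altsum_cat altsum_take2 !nth_drop addn0 /ent.
have -> : ((2 * k + 2).-1.-1 = 2 * k)%N by lia.
have -> : ((2 * k + 2).-1 = 2 * k + 1)%N by lia.
case: (ltnP (2 * k) (size x)) => h.
  by rewrite size_take h -signr_odd oddM /= expr0 mul1r.
have h' : (size x <= 2 * k + 1)%N by lia.
by rewrite !nth_default // subrr mulr0.
Qed.

Lemma highest_weight_prefixes N x :
  size x = (2 * N)%N -> highest_weight N x -> hw_prefixes x.
Proof.
move=> sz hw j hj ev.
have ej : j = (2 * j./2)%N.
  by rewrite -{1}(odd_double_half j) (negbTE ev) add0n -muln2 mulnC.
case E: j./2 => [|k]; first by rewrite ej E take0.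
rewrite ej E -highest_weight_sum; last by rewrite sz oddM.
apply: hw; rewrite ltn0Sn /=; move: hj; rewrite sz ej E; lia.
Qed.

End HighestWeight.

Section AlgorithmStep.
Variable R : realFieldType.
Implicit Types (u w y : seq R) (ps : seq (R * nat)).

Definition expand_blocks ps : seq R := flatten [seq p.1 :: nseq p.2 0 | p <- ps].
Definition odd_blocks ps : seq R := flatten [seq p.1 :: nseq (odd p.2) 0 | p <- ps].

Definition next_of_blocks ps : seq R :=
  let vs := grp ps in
  if (if ps is [::] then false else odd (last (0, 0%N) ps).2) then
    match take (size vs).-1 vs with [::] => [::] | v :: r => (v + last 0 vs) :: r end
  else vs.

Lemma next_arrE y : next_arr y = next_of_blocks (blocks y).2.
Proof. by []. Qed.

Lemma blocks_cons (a : R) y : blocks (a :: y) =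
  if a == 0 then ((blocks y).1.+1, (blocks y).2)
  else (0%N, (a, (blocks y).1) :: (blocks y).2).
Proof. by []. Qed.

Lemma blocksK y : y = nseq (blocks y).1 0 ++ expand_blocks (blocks y).2.
Proof.
by elim: y => [|a y IH] //; rewrite blocks_cons; case: eqP => [->|_] /=; rewrite {1}IH.
Qed.

Lemma blocks_pos y : nonneg y -> all (fun p => 0 < p.1) (blocks y).2.
Proof.
elim: y => [|a y IH] // /andP[a0 y0]; rewrite blocks_cons.
case: eqP => [_|/eqP a_neq0] /=; first exact: IH.
by rewrite lt_def a_neq0 a0 IH.
Qed.

Lemma reduces_zeros u (t : nat) w : reduces (u ++ nseq (2 * t) 0 ++ w) (u ++ w) t.
Proof.
elim: t => [|t IH]; first by rewrite muln0; exact: reduces_refl.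
by rewrite mulnS; apply: reduces_step IH; apply: step_00.
Qed.

(* Rule (b), first half: even parts of the zero runs are deleted. *)
Lemma reduces_odd_blocks u ps :
  reduces (u ++ expand_blocks ps) (u ++ odd_blocks ps) (\sum_(p <- ps) p.2./2).
Proof.
elim: ps u => [|[a z] ps IH] u; first by rewrite big_nil; exact: reduces_refl.
have split_z : nseq z (0 : R) = nseq (2 * z./2) 0 ++ nseq (odd z) 0.
  by rewrite -nseqD -{1}(odd_double_half z) -muln2 mulnC addnC.
rewrite big_cons /=.
have -> : u ++ (a :: nseq z 0) ++ expand_blocks ps =
  (u ++ [:: a]) ++ nseq (2 * z./2) 0 ++ (nseq (odd z) 0 ++ expand_blocks ps).
  by rewrite split_z /= -!catA.
apply: reduces_trans (reduces_zeros _ _ _) _.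
by have := IH (u ++ a :: nseq (odd z) 0); rewrite -!catA.
Qed.

Lemma grp_cons_ex (a : R) z ps : exists g rest, grp ((a, z) :: ps) = g :: rest.
Proof. rewrite /=; case: (grp ps) => [|g r]; last case: ifP; by eauto. Qed.

Lemma grp_consE (a : R) z ps : grp ((a, z) :: ps) =
  match grp ps with
  | g :: rest => if odd z then (a + g) :: rest else a :: g :: rest
  | [::] => [:: a]
  end.
Proof. by []. Qed.

(* Rule (b), second half: a single zero between two entries merges them;
   only the zero run after the last entry may remain. *)
Lemma reduces_merge u (p : R * nat) ps :
  reduces (u ++ odd_blocks (p :: ps)) (u ++ grp (p :: ps) ++ nseq (odd (last p ps).2) 0)
     (\sum_(q <- belast p ps) odd q.2).
Proof.
elim: ps u p => [|q ps IH] u [a z].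
  by rewrite big_nil /odd_blocks /= cats0; exact: reduces_refl.
rewrite [belast _ _]/= big_cons [last _ _]/=.
have := IH (u ++ a :: nseq (odd z) 0) q.
have -> : u ++ odd_blocks [:: (a, z), q & ps] =
  (u ++ a :: nseq (odd z) 0) ++ odd_blocks (q :: ps) by rewrite -catA.
case: q => [b zb]; have [g [rest Eg]] := grp_cons_ex b zb ps; rewrite Eg => H.
rewrite grp_consE Eg [(a, z).2]/=; case: (odd z) H => H.
  rewrite addnC; apply: reduces_trans H _; rewrite -catA /=.
  exact/step_reduces/step_a0b.
by rewrite add0n -catA; move: H; rewrite -!catA.
Qed.

(* Rule (c): an odd trailing run wraps the last entry onto the first. *)
Lemma reduces_wrap (g : R) rest : reduces (g :: rest ++ [:: 0])
  (match take (size (g :: rest)).-1 (g :: rest) with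
   | [::] => [::] | v :: r => (v + last 0 (g :: rest)) :: r end) 1.
Proof.
case/lastP: rest => [|mid l] /=; first exact/step_reduces/step_pair.
rewrite size_rcons /= -cats1 take_size_cat // last_cat -catA.
exact/step_reduces/step_wrap.
Qed.

Lemma reduces_next_of_blocks ps :
  reduces (expand_blocks ps) (next_of_blocks ps) (\sum_(p <- ps) uphalf p.2).
Proof.
case: ps => [|p ps]; first by rewrite big_nil; exact: reduces_refl.
have -> : (\sum_(q <- p :: ps) uphalf q.2 =
   \sum_(q <- p :: ps) q.2./2 + (\sum_(q <- belast p ps) odd q.2 + odd (last p ps).2))%N.
  rewrite (eq_bigr (fun q => odd q.2 + q.2./2)%N); last by move=> q _; rewrite uphalf_half.
  rewrite big_split /= addnC; congr (_ + _)%N.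
  by rewrite lastI -cats1 big_cat big_seq1.
have := reduces_odd_blocks [::] (p :: ps); rewrite !cat0s => odd_runs.
apply: reduces_trans odd_runs _.
have := reduces_merge [::] p ps; rewrite !cat0s => merged.
apply: reduces_trans merged _.
rewrite /next_of_blocks [last _ (p :: ps)]/=.
case: p => a z; have [g [rest Eg]] := grp_cons_ex a z ps; rewrite Eg.
by case: (odd _); [exact: reduces_wrap | rewrite cats0; exact: reduces_refl].
Qed.

Lemma altsum_nseq0 n : altsum (nseq n (0 : R)) = 0.
Proof. by elim: n => //= n ->; rewrite subr0. Qed.

Lemma blocks_lead_even y :
  nonneg y -> hw_prefixes y -> ~~ odd (size y) -> ~~ odd (blocks y).1.
Proof.
move=> y0 hy ev; have yE := blocksK y; have := blocks_pos y0.
case: (blocks y) yE => z0 [|[a z] ps] /= yE; first by rewrite yE cats0 size_nseq in ev.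
case/andP=> a_gt0 _; apply/negP => odd_z0.
have hz : (z0.+1 < z0)%N = false by lia.
have := hy z0.+1; rewrite yE take_cat size_nseq hz subSnn /= take0.
rewrite altsum_cat altsum_nseq0 size_nseq -signr_odd odd_z0 /= subr0 mulN1r.
rewrite add0r oppr_ge0 leNgt a_gt0 => /(_ _ isT) contra.
suff /contra : (z0 < size (nseq z0 (0 : R)%R ++ expand_blocks ((a, z) :: ps)))%N by [].
by rewrite size_cat size_nseq /=; lia.
Qed.

Lemma reduces_next_arr y :
  nonneg y -> hw_prefixes y -> ~~ odd (size y) -> reduces y (next_arr y) (nu_of y).
Proof.
move=> y0 hy ev; have z0_even := blocks_lead_even y0 hy ev.
have yE : y = nseq (2 * (blocks y).1./2) 0 ++ expand_blocks (blocks y).2.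
  have -> : (2 * (blocks y).1./2)%N = (blocks y).1.
    by rewrite -[RHS]odd_double_half (negbTE z0_even) add0n -muln2 mulnC.
  exact: blocksK.
rewrite /nu_of next_arrE uphalf_half (negbTE z0_even) add0n.
have := reduces_zeros [::] (blocks y).1./2 (expand_blocks (blocks y).2).
rewrite !cat0s -yE => lead_zeros.
exact: reduces_trans lead_zeros (reduces_next_of_blocks _).
Qed.

Lemma grp_pos ps : all (fun p => 0 < p.1) ps -> all (fun a : R => 0 < a) (grp ps).
Proof.
elim: ps => [|[a z] ps IH] //= /andP[a0 /IH]; case: (grp ps) => [|g r] /=.
  by rewrite a0.
by case: ifP => _ /= /andP[g0 ->]; rewrite ?a0 ?g0 ?addr_gt0.
Qed.

Lemma next_arr_pos y : nonneg y -> all (fun a : R => 0 < a) (next_arr y).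
Proof.
move=> y0; have := grp_pos (blocks_pos y0); rewrite next_arrE /next_of_blocks.
case: (blocks y).2 => [|[a z] ps] //.
have [g [rest Eg]] := grp_cons_ex a z ps; rewrite Eg.
case: (odd _) => //; case/lastP: rest {Eg} => [|mid l] //.
rewrite /= size_rcons /= -cats1 take_size_cat // last_cat /= all_cat /=.
by move=> /and4P[g0 -> l0 _]; rewrite andbT addr_gt0.
Qed.

Lemma nu_of_pos y : nonneg y -> 0 \in y -> (0 < nu_of y)%N.
Proof.
move=> y0; rewrite {1}(blocksK y) /nu_of mem_cat.
have := blocks_pos y0; case: (blocks y) => z0 ps /= pos /orP[].
  by case: z0 => //= n _; rewrite uphalf_half; lia.
move=> in_ps; suff : (0 < \sum_(p <- ps) uphalf p.2)%N by lia.
elim: ps pos in_ps => [|[a z] ps IH] //= /andP[a0 pos]; rewrite big_cons /=.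
rewrite /expand_blocks /= -/(expand_blocks ps) inE mem_cat => /or3P[/eqP a00||].
- by move: a0; rewrite -a00 ltxx.
- by case: z => //= z _; rewrite uphalf_half; lia.
- by move/(IH pos); lia.
Qed.

End AlgorithmStep.

Section AdmissibleMasks.
Local Open Scope nat_scope.

Definition gap (i j : nat) : bool := i.+1 < j.

Lemma gap_trans : transitive gap.
Proof. by rewrite /gap => j i k; lia. Qed.

Lemma mem_mask_iota m st n i : i \in mask m (iota st n) -> (st <= i < st + n)%N.
Proof. by move/mem_mask; rewrite mem_iota. Qed.

Lemma sorted_gap_mask m st :
  sorted gap (mask m (iota st (size m))) = sorted nonadj m.
Proof.
elim: m st => [|b m IH] st //=; case: b => /=; last by rewrite IH sorted_path_false.
case: m IH => [|c m] IH //=.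
rewrite (path_sortedE gap_trans); case: c IH => IH /=; first by rewrite /gap ltnn.
have -> : all (gap st) (mask m (iota st.+2 (size m))).
  by apply/allP => i /mem_mask_iota; rewrite /gap; lia.
exact: IH st.+1.
Qed.

Lemma head_mask_iota m : (head 0 (mask m (iota 1 (size m))) == 1)%N = head false m.
Proof.
case: m => [|[] m] //=.
case E: (mask m (iota 2 (size m))) => [|x s] //=.
have : x \in mask m (iota 2 (size m)) by rewrite E mem_head.
by move/mem_mask_iota => h; apply/negbTE; lia.
Qed.

Lemma last_mask_iota m : (0 < size m)%N ->
  (last 0 (mask m (iota 1 (size m))) == size m)%N = last false m.
Proof.
case/lastP: m => [|m b] //= _.
have -> : size (rcons m b) = (size m + 1)%N by rewrite size_rcons addn1.
rewrite iotaD -cats1 add1n mask_cat ?size_iota //.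
case: b => /=; first by rewrite !last_cat /= addn1 eqxx.
rewrite cats0 !last_cat /=.
case E: (mask m (iota 1 (size m))) => [|x s] /=; first by rewrite addn1.
have : last x s \in mask m (iota 1 (size m)) by rewrite E mem_last.
by move/mem_mask_iota => h; apply/negbTE; lia.
Qed.

Lemma admissible_mask N k m : size m = (2 * N)%N -> (0 < N)%N ->
  admissible N k (mask m (iota 1 (2 * N))) = (count id m == k) && cycle nonadj m.
Proof.
move=> sz N_gt0; rewrite /admissible size_mask ?size_iota //.
have -> : all (fun i => (1 <= i <= 2 * N)%N) (mask m (iota 1 (2 * N))).
  by apply/allP => i /mem_mask_iota; lia.
rewrite cycle_nonadjE -sz sorted_gap_mask head_mask_iota last_mask_iota; last by lia.
by case: (count id m == k).
Qed.

Lemma subseq_iota n st t : sorted ltn t -> all (fun i => st <= i < st + n)%N t ->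
  subseq t (iota st n).
Proof.
elim: n st t => [|n IH] st [|x t] //=; first by move=> _ /andP[]; lia.
move=> st_t /andP[hx ht]; have := st_t.
rewrite (path_sortedE ltn_trans) => /andP[ax st'].
case: eqP => [ex|nx]; apply: IH => //.
  by apply/allP => i it; move/allP: ax => /(_ i it); move/allP: ht => /(_ i it); lia.
rewrite /= (_ : (st.+1 <= x < st.+1 + n)%N); last by move: hx nx; lia.
by apply/allP => i it; move/allP: ax => /(_ i it); move/allP: ht => /(_ i it); lia.
Qed.

Lemma admissible_is_mask N k t : admissible N k t ->
  exists2 m, size m = (2 * N)%N & t = mask m (iota 1 (2 * N)).
Proof.
case/and4P=> _ t_range t_sorted _.
have : subseq t (iota 1 (2 * N)).
  apply: subseq_iota; last by apply/allP => i /(allP t_range); lia.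
  by apply: sub_sorted t_sorted => i j; lia.
by case/subseqP => m; rewrite size_iota; exists m.
Qed.

End AdmissibleMasks.

Section TupleSums.
Variable R : realFieldType.

Lemma tuple_sum_mask (A : seq R) m : size m = size A ->
  tuple_sum A (mask m (iota 1 (size A))) = mask_sum A m.
Proof.
move=> sz; rewrite /tuple_sum /mask_sum -(big_map (fun i => ent A i) xpredT id) map_mask.
congr (\sum_(a <- mask m _) a).
rewrite -[iota 1 _]/(iota (1 + 0) _) iotaDl -map_comp.
rewrite (eq_map (g := nth 0 A)); first exact: mkseq_nth.
by move=> i; rewrite /ent.
Qed.

Lemma cyclic_min_admissible N (A : seq R) k v :
  (0 < N)%N -> size A = (2 * N)%N -> cyclic_min A k v ->
  (exists2 t, admissible N k t & v = tuple_sum A t) /\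
  (forall t, admissible N k t -> v <= tuple_sum A t).
Proof.
move=> N_gt0 szA [[m [szm cym ctm] <-] lb]; split.
  exists (mask m (iota 1 (2 * N)%N)).
    by rewrite admissible_mask ?ctm ?eqxx ?cym // szm.
  by rewrite -szA tuple_sum_mask.
move=> t adm_t; have [m' szm' tE] := admissible_is_mask adm_t.
move: adm_t; rewrite tE admissible_mask // => /andP[/eqP ctm' cym'].
by rewrite -szA tuple_sum_mask ?szA // lb ?szA ?ctm'.
Qed.

End TupleSums.

Section Algorithm.
Variable R : realFieldType.
Implicit Types (x y : seq R) (L : seq R).

Lemma foldr_min_spec (h : R) (s : seq R) :
  [/\ foldr Order.min h s <= h, (forall a, a \in s -> foldr Order.min h s <= a) &
      (foldr Order.min h s == h) || (foldr Order.min h s \in s)].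
Proof.
elim: s => [|a s [IH1 IH2 IH3]] /=; first by rewrite lexx eqxx.
split.
- by rewrite ge_min IH1 orbT.
- move=> b; rewrite inE => /orP[/eqP ->|bs]; first by rewrite ge_min lexx.
  by rewrite ge_min IH2 ?orbT.
- rewrite minEle; case: ifP => _; first by rewrite inE eqxx orbT.
  by move: IH3 => /orP[->|h2] //; rewrite inE h2 !orbT.
Qed.

Lemma seqmin_spec x : x != [::] ->
  seqmin x \in x /\ (forall a, a \in x -> seqmin x <= a).
Proof.
case: x => [|h s] // _; rewrite /seqmin /=.
have [H1 H2 H3] := foldr_min_spec h s; split.
- rewrite inE minEle; case: ifP => _; first by rewrite eqxx.
  by move: H3 => /orP[->|->]; rewrite ?orbT.
- move=> b; rewrite inE => /orP[/eqP ->|bs]; first by rewrite ge_min lexx.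
  by rewrite ge_min H2 ?orbT.
Qed.

Lemma sum_shift (mu : R) (s : seq R) :
  \sum_(a <- [seq b + mu | b <- s]) a = \sum_(a <- s) a + mu *+ size s.
Proof.
elim: s => [|a s IH] /=; first by rewrite !big_nil addr0.
by rewrite !big_cons IH mulrS; ring.
Qed.

Lemma cyclic_min_shift (mu : R) y k v : 0 <= mu -> cyclic_min y k v ->
  cyclic_min [seq b + mu | b <- y] k (v + mu *+ k).
Proof.
move=> mu_ge0 [[m [sz cy ct] ws] lb].
have sumE m' : size m' = size y ->
    mask_sum [seq b + mu | b <- y] m' = mask_sum y m' + mu *+ count id m'.
  by move=> sz'; rewrite /mask_sum -map_mask sum_shift size_mask.
split; first by exists m; [rewrite size_map | rewrite sumE // ws ct].
move=> m' sz' cy' ct'; rewrite size_map in sz'; rewrite sumE //.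
by rewrite lerD ?lb // -(subnK ct') mulrnDr lerDr mulrn_wge0.
Qed.

Lemma diagram_shift (mu : R) y L : 0 <= mu -> diagram y L ->
  diagram [seq b + mu | b <- y] [seq e + mu | e <- L].
Proof.
move=> mu_ge0 DL k; rewrite size_map => kL.
have -> : \sum_(0 <= j < k) nth 0 [seq e + mu | e <- L] j =
          \sum_(0 <= j < k) nth 0 L j + mu *+ k.
  rewrite (eq_big_nat _ _ (F2 := fun j => nth 0 L j + mu)); last first.
    by move=> j /andP[_ jk]; rewrite (nth_map 0) // (leq_trans jk).
  by rewrite big_split /= sumr_const_nat subn0.
exact: cyclic_min_shift (DL k kL).
Qed.

Lemma ells_shift (acc : R) ps : ells acc ps = [seq acc + e | e <- ells 0 ps].
Proof.
elim: ps acc => [|[mu nu] ps IH] acc //=.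
rewrite map_cat map_nseq IH (IH (0 + mu)) -map_comp add0r; congr (_ ++ _).
by apply: eq_map => e /=; rewrite addrA.
Qed.

Lemma ells_cons (mu : R) nu ps :
  ells 0 ((mu, nu) :: ps) = [seq e + mu | e <- nseq nu 0 ++ ells 0 ps].
Proof.
rewrite /= add0r ells_shift map_cat map_nseq add0r; congr (_ ++ _).
by apply: eq_map => e; rewrite addrC.
Qed.

Lemma algoI_S f M x : algoI f.+1 M x =
  let y := [seq a - seqmin x | a <- x] in
  (seqmin x, nu_of y) ::
  (if (M - nu_of y == 0)%N then [::] else algoI f (M - nu_of y) (next_arr y)).
Proof. by rewrite /=; case: ifP. Qed.

Lemma algoI_diagram fuel n x : (n <= fuel)%N -> (0 < n)%N -> size x = (2 * n)%N ->
  all (fun a => 0 < a) x -> hw_prefixes x ->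
  size (ells 0 (algoI fuel n x)) = n /\ diagram x (ells 0 (algoI fuel n x)).
Proof.
elim: fuel n x => [|f IH] n x n_le n_gt0 szx x_gt0 hx; first by lia.
rewrite algoI_S; cbv zeta.
set mu := seqmin x; set y := [seq a - mu | a <- x]; set nu := nu_of y.
have x_nil : x != [::] by apply/eqP => x_nil; move: szx; rewrite x_nil /=; lia.
have [mu_in mu_min] := seqmin_spec x_nil; rewrite -/mu in mu_in mu_min.
have mu_gt0 : 0 < mu by apply: (allP x_gt0).
have y_ge0 : nonneg y by apply/allP => _ /mapP[a ax ->]; rewrite subr_ge0 mu_min.
have xE : x = [seq b + mu | b <- y].
  by rewrite -map_comp (eq_map (g := id)) ?map_id // => a /=; rewrite subrK.
have y_even : ~~ odd (size y) by rewrite size_map szx oddM.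
have red := reduces_next_arr y_ge0 (hw_prefixes_sub (c := mu) hx) y_even.
have sz_next := reduces_size red; rewrite size_map szx -/nu in sz_next.
have nu_gt0 : (0 < nu)%N.
  by apply: nu_of_pos y_ge0 _; apply/mapP; exists mu; rewrite ?subrr.
set rest := if _ then _ else _.
have [sz_rest D_rest] :
    size (ells 0 rest) = (n - nu)%N /\ diagram (next_arr y) (ells 0 rest).
  rewrite /rest; case: eqP => n_nu.
    have -> : next_arr y = [::] by apply/size0nil; lia.
    by split; [rewrite n_nu | exact: diagram_nil].
  apply: IH; [lia | lia | lia | exact: next_arr_pos |].
  exact: reduces_hw_prefixes red y_ge0 (hw_prefixes_sub (c := mu) hx).
rewrite ells_cons size_map size_cat size_nseq sz_rest; split; first lia.
by rewrite xE; apply: diagram_shift (ltW mu_gt0) _; apply: reduces_diagram red y_ge0 D_rest.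
Qed.

End Algorithm.

Unset Implicit Arguments. Set Strict Implicit. Set Printing Implicit Defensive.

Theorem mainTheorem7 (R : realFieldType) (N : nat) (A : seq R)
  (hN : (1 <= N)%N)
  (hsize : size A = (2 * N)%N)
  (hpos : forall i, (1 <= i <= 2 * N)%N -> 0 < ent A i)
  (hsum : \sum_(1 <= l < N.+1) ent A (2 * l) < \sum_(1 <= l < N.+1) ent A (2 * l).-1)
  (hhw : highest_weight N A) :
  size (ell_list N A) = N /\
  forall k, (1 <= k <= N)%N ->
    (exists2 t, admissible N k t &
       \sum_(0 <= j < k) nth 0 (ell_list N A) j = tuple_sum A t) /\
    (forall t, admissible N k t ->
       \sum_(0 <= j < k) nth 0 (ell_list N A) j <= tuple_sum A t).
Proof.
have A_gt0 : all (fun a => 0 < a) A.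
  apply/allP => _ /(nthP 0) [i iA <-]; have := hpos i.+1; rewrite /ent; apply.
  by move: iA; rewrite hsize; lia.
have [szL DL] :=
  algoI_diagram (leqnn N) hN hsize A_gt0 (highest_weight_prefixes hsize hhw).
rewrite /ell_list; split => // k /andP[_ kN].
by apply: cyclic_min_admissible hN hsize (DL k _); rewrite szL.
Qed.
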